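(* Let $m\in\mathbb{N}$, $0<\sigma_1<\sigma_2<\dots<\sigma_m$, and $b_1,\dots,b_m>0$ with $\sum_{i=1}^m b_i<1$. Let $M$ be the symmetric $m\times m$ matrix with $M_{ii}=(1-b_i)/\sigma_i$ and $M_{ij}=-\sqrt{b_ib_j/(\sigma_i\sigma_j)}$ for $i\neq j$, and let $\mu_1<\dots<\mu_m$ be the roots of $$1+\sum_{j=1}^m\frac{\sigma_jb_j}{(1-\sum_{i=1}^mb_i)(\sigma_j-\lambda)}=0.$$ Then the eigenvalues of $M$ are exactly $1/\mu_1>1/\mu_2>\dots>1/\mu_m$ (all simple); equivalently, the squared semi-axes $h_1^2\le\dots\le h_m^2$ of the ellipsoid $\{p\in\mathbb{R}^m: p^{T}Mp=1\}$ satisfy $h_k^2=\mu_k$ for $k=1,\dots,m$.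
   Context: Under the stated hypotheses the displayed equation in $\lambda$ has exactly $m$ roots, all real, satisfying $\sigma_j<\mu_j<\sigma_{j+1}$ ($j<m$) and $\sigma_m<\mu_m$. *)

From HB Require Import structures.
From mathcomp Require Import all_boot all_order all_algebra.
Set Implicit Arguments. Unset Strict Implicit. Unset Printing Implicit Defensive.
Import Order.TTheory GRing.Theory Num.Theory.
Local Open Scope ring_scope.

Definition Mmat (R : rcfType) (m : nat) (sigma b : 'I_m -> R) : 'M[R]_m :=
  \matrix_(i < m, j < m)
    if i == j then (1 - b i) / sigma i
    else - Num.sqrt (b i * b j / (sigma i * sigma j)).

Definition secular (R : rcfType) (m : nat) (sigma b : 'I_m -> R) (l : R) : R :=
  1 + \sum_(j < m) (sigma j * b j) / ((1 - \sum_(i < m) b i) * (sigma j - l)).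

(* l is a root of the equation: l is in the domain (no pole) and the LHS vanishes. *)
Definition is_secular_root (R : rcfType) (m : nat) (sigma b : 'I_m -> R) (l : R) : Prop :=
  (forall j, l != sigma j) /\ secular sigma b l = 0.

From HB Require Import structures.
From mathcomp Require Import all_boot all_order all_algebra.
From mathcomp Require Import ring.
Import Order.TTheory GRing.Theory Num.Theory.
Local Open Scope ring_scope.

(* With u_i = sqrt (b_i / sigma_i), the matrix M is a rank-one
   update of a diagonal matrix: M = diag (1/sigma_i) - u^T u.  For such a
   matrix D - u^T u, any a different from every d_i with
   sum_i u_i^2 / (d_i - a) = 1 is an eigenvalue, with eigenvector
   x_i = u_i / (d_i - a).  For a root l of the secular equation, the secular
   equation is exactly this condition for d_i = 1/sigma_i and a = 1/l, so each
   1/mu_k is an eigenvalue of M.  The mu_k are strictly increasing, hence the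
   1/mu_k are m distinct eigenvalues of the m x m matrix M; they are then all
   the roots of its (monic, degree m) characteristic polynomial, which is
   therefore the product of the 'X - 1/mu_k. *)

Lemma rank_one_update_eigenvalue (F : fieldType) (m : nat) (A : 'M[F]_m)
    (d u : 'I_m -> F) (a : F) (k : 'I_m) :
  (forall i j, A i j = (i == j)%:R * d i - u i * u j) ->
  (forall i, d i != a) -> u k != 0 ->
  \sum_i u i ^+ 2 / (d i - a) = 1 ->
  eigenvalue A a.
Proof.
move=> hA hda huk hsec.
have hd i : d i - a != 0 by rewrite subr_eq0.
pose x := \row_i (u i / (d i - a)).
have hxu : \sum_i x 0 i * u i = 1.
  by rewrite -hsec; apply: eq_bigr => i _; rewrite mxE mulrAC -expr2.
apply/eigenvalueP; exists x.
  apply/rowP => j; rewrite !mxE.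
  under eq_bigr => i _ do rewrite hA mulrBr [x 0 i * (u i * u j)]mulrA.
  rewrite sumrB -mulr_suml hxu mul1r (bigD1 j) //= big1 ?addr0; last first.
    by move=> i /negbTE ->; rewrite mul0r mulr0.
  by rewrite eqxx mul1r !mxE; field; rewrite hd.
apply/negP => /eqP/(congr1 (fun v : 'rV_m => v 0 k)); rewrite !mxE => /eqP.
by rewrite mulf_eq0 invr_eq0 (negbTE (hd k)) orbF (negbTE huk).
Qed.

(* An m x m matrix with m pairwise distinct eigenvalues f k has characteristic
   polynomial prod_k ('X - f k): these are m distinct roots of a monic
   polynomial of degree m. *)
Lemma char_poly_distinct_eigenvalues {F : fieldType} {m : nat} {A : 'M[F]_m}
    {f : 'I_m -> F} :
  injective f -> (forall k, eigenvalue A (f k)) ->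
  char_poly A = \prod_k ('X - (f k)%:P).
Proof.
move=> finj feig.
rewrite -big_enum -(big_map f xpredT (fun z => 'X - z%:P)).
rewrite {1}(@all_roots_prod_XsubC _ (char_poly A) [seq f k | k <- enum 'I_m]).
- by rewrite (monicP (char_poly_monic _)) scale1r.
- by rewrite size_char_poly size_map size_enum_ord.
- by apply/allP => z /mapP [k _ ->]; rewrite -eigenvalue_root_char.
by rewrite uniq_rootsE map_inj_uniq ?enum_uniq.
Qed.

Section SecularEquation.

Variables (R : rcfType) (m : nat) (sigma b : 'I_m -> R).
Hypothesis sigma_gt0 : forall i, 0 < sigma i.
Hypothesis b_gt0 : forall i, 0 < b i.
Hypothesis sum_b_lt1 : \sum_(i < m) b i < 1.

Definition weight (i : 'I_m) : R := Num.sqrt (b i / sigma i).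

Lemma weight_sqr i : weight i ^+ 2 = b i / sigma i.
Proof. by rewrite sqr_sqrtr // ltW // divr_gt0. Qed.

Lemma weight_neq0 i : weight i != 0.
Proof. by rewrite gt_eqF // sqrtr_gt0 divr_gt0. Qed.

Lemma Mmat_rank_one i j :
  Mmat sigma b i j = (i == j)%:R * (sigma i)^-1 - weight i * weight j.
Proof.
have hsn : sigma i != 0 by rewrite gt_eqF.
rewrite /Mmat mxE; case: eqP => [<-|_].
  by rewrite -expr2 weight_sqr /=; field.
rewrite /= mul0r sub0r /weight -sqrtrM ?ltW ?divr_gt0 //.
by congr (- Num.sqrt _); rewrite invfM; ring.
Qed.

(* 0 is not a root: at l = 0 every term of the secular sum is positive. *)
Lemma secular_root_neq0 {l} : is_secular_root sigma b l -> l != 0.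
Proof.
case=> _; apply: contra_eqN => /eqP ->; rewrite /secular gt_eqF //.
rewrite ltr_pwDl // sumr_ge0 // => i _.
by rewrite subr0 ltW // divr_gt0 ?mulr_gt0 // subr_gt0.
Qed.

(* In the variables d_i = 1/sigma_i and a = 1/l, the secular equation becomes
   the eigenvalue condition of rank_one_update_eigenvalue. *)
Lemma secular_root_weights l : is_secular_root sigma b l ->
  \sum_i weight i ^+ 2 / ((sigma i)^-1 - l^-1) = 1.
Proof.
move=> hr; have hl := secular_root_neq0 hr; case: hr => hne hsec.
set B := \sum_(i < m) b i in hsec.
have hB : 1 - B != 0 by rewrite subr_eq0 gt_eqF.
have hsl i : sigma i - l != 0 by rewrite subr_eq0 eq_sym.
have hsn i : sigma i != 0 by rewrite gt_eqF.
have pole_sum : \sum_i sigma i * b i / (sigma i - l) = - (1 - B).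
  have scaled : (1 - B) * secular sigma b l =
                (1 - B) + \sum_i sigma i * b i / (sigma i - l).
    rewrite /secular -/B mulrDr mulr1 mulr_sumr; congr (_ + _).
    by apply: eq_bigr => i _; field; rewrite hB hsl.
  by apply/eqP; rewrite -addr_eq0 addrC -scaled hsec mulr0.
transitivity (\sum_i (b i - sigma i * b i / (sigma i - l))).
  apply: eq_bigr => i _; rewrite weight_sqr.
  by field; rewrite hsl hl hsn mulN1r subr_eq0 hne.
by rewrite big_split /= sumrN -/B pole_sum opprK addrC subrK.
Qed.

(* Each root l of the secular equation gives the eigenvalue 1/l of M; the
   index k only witnesses m > 0, which makes the eigenvector nonzero. *)
Lemma secular_root_eigenvalue l (k : 'I_m) :
  is_secular_root sigma b l -> eigenvalue (Mmat sigma b) l^-1.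
Proof.
move=> hr; have [hne _] := hr.
apply: (@rank_one_update_eigenvalue _ _ _ _ _ _ k Mmat_rank_one _ (weight_neq0 k)).
  by move=> i; apply: contra_neq (hne i) => /invr_inj ->.
exact: secular_root_weights.
Qed.

End SecularEquation.

Theorem lemma2p9 (R : rcfType) (m : nat) (sigma b mu : 'I_m -> R)
  (hsig_pos : forall i, 0 < sigma i)
  (hsig_inc : forall i j : 'I_m, (i < j)%N -> sigma i < sigma j)
  (hb_pos : forall i, 0 < b i)
  (hb_sum : \sum_(i < m) b i < 1)
  (hmu_inc : forall i j : 'I_m, (i < j)%N -> mu i < mu j)
  (hmu_roots : forall l : R, is_secular_root sigma b l <-> exists k, l = mu k) :
  (forall a : R, eigenvalue (Mmat sigma b) a <-> exists k, a = (mu k)^-1) /\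
  char_poly (Mmat sigma b) = \prod_(k < m) ('X - ((mu k)^-1)%:P).
Proof.
have mu_inj : injective mu.
  move=> i j e; apply/val_inj/eqP; case: (ltngtP i j) => // lt_ij.
  - by move: (hmu_inc _ _ lt_ij); rewrite e ltxx.
  - by move: (hmu_inc _ _ lt_ij); rewrite e ltxx.
have inv_mu_eig k : eigenvalue (Mmat sigma b) (mu k)^-1.
  by apply: secular_root_eigenvalue => //; apply/hmu_roots; exists k.
have hP : char_poly (Mmat sigma b) = \prod_(k < m) ('X - ((mu k)^-1)%:P).
  exact: char_poly_distinct_eigenvalues (inj_comp (@invr_inj _) mu_inj) inv_mu_eig.
split=> [a|//]; rewrite eigenvalue_root_char hP -big_enum.
rewrite -(big_map (fun k => (mu k)^-1) xpredT (fun z => 'X - z%:P)) root_prod_XsubC.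
split=> [/mapP [k _ ->]|[k ->]]; first by exists k.
by apply/mapP; exists k; rewrite ?mem_enum.
Qed.
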